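(* Let $V>0$. Then $\mathcal{C}(V,T,\bar P)\subseteq\hat{\mathcal{C}}(\bar P)$ for every $T>0$, and as $T\to\infty$ the capacity region $\mathcal{C}(V,T,\bar P)$ tends to $\hat{\mathcal{C}}(\bar P)=\{(r_1,r_2): r_1+r_2\le\log_2(1+\bar P\beta_0/H^2),\ r_1,r_2\ge0\}$, i.e. $\mathcal{C}(V,\infty,\bar P)=\hat{\mathcal{C}}(\bar P)$: every point of $\hat{\mathcal{C}}(\bar P)$ is the limit as $T\to\infty$ of rate pairs in $\mathcal{C}(V,T,\bar P)$. Moreover, this limit is achieved by hover-fly-hover (HFH) trajectories with $x_{\rm I}=-D/2$ and $x_{\rm F}=D/2$ combined with TDMA-based transmission; that is, TDMA is capacity-achieving in this limit.
   Context: Fix $D>0$, $H>0$, $\beta_0>0$, $\bar P>0$. Ground users GU 1, GU 2 are at $x_1=-D/2$, $x_2=D/2$; for UAV horizontal position $x$ (altitude $H$), $h_k(x)=\beta_0/((x-x_k)^2+H^2)$. For $T>0$, $V\ge0$: a feasible trajectory is $x:[0,T]\to\mathbb{R}$ with $|\dot x(t)|\le V$; a feasible power allocation is measurable $p_1,p_2\ge0$ with $p_1(t)+p_2(t)\le\bar P$. $\mathcal{C}(x,p)$ is the set of $(r_1,r_2)$, $r_1,r_2\ge0$, with $r_1\le\frac1T\int_0^T\log_2(1+p_1h_1(x))dt$, $r_2\le\frac1T\int_0^T\log_2(1+p_2h_2(x))dt$, $r_1+r_2\le\frac1T\int_0^T\log_2(1+p_1h_1(x)+p_2h_2(x))dt$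 (arguments $t$ suppressed). $\mathcal{C}(V,T,\bar P)$ is the union of $\mathcal{C}(x,p)$ over feasible $x,p$. An HFH trajectory with parameters $-D/2\le x_{\rm I}\le x_{\rm F}\le D/2$, $t_{\rm I},t_{\rm F}\ge0$, $t_{\rm I}+(x_{\rm F}-x_{\rm I})/V+t_{\rm F}=T$, is $x(t)=x_{\rm I}$ for $t\in[0,t_{\rm I}]$, $x(t)=x_{\rm I}+(t-t_{\rm I})V$ for $t\in(t_{\rm I},T-t_{\rm F})$, $x(t)=x_{\rm F}$ for $t\in[T-t_{\rm F},T]$. TDMA-based transmission means that at each time at most one user is served with power $\bar P$, i.e. $(p_1(t),p_2(t))\in\{(\bar P,0),(0,\bar P),(0,0)\}$. *)

From mathcomp Require Import all_boot all_order all_algebra.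
From mathcomp Require Import all_classical all_reals all_analysis.
Set Implicit Arguments. Unset Strict Implicit. Unset Printing Implicit Defensive.
Import Order.TTheory GRing.Theory Num.Theory.
Local Open Scope ring_scope.
Local Open Scope classical_set_scope.

Definition log2 {R : realType} (x : R) : R := ln x / ln 2.

Definition gain {R : realType} (H b0 xk x : R) : R := b0 / ((x - xk) ^+ 2 + H ^+ 2).
Definition h1 {R : realType} (D H b0 x : R) : R := gain H b0 (- (D / 2)) x.
Definition h2 {R : realType} (D H b0 x : R) : R := gain H b0 (D / 2) x.

Definition feasible_traj {R : realType} (V T : R) (x : R -> R) : Prop :=
  forall s t, s \in `[0, T] -> t \in `[0, T] -> `|x t - x s| <= V * `|t - s|.

Definition feasible_power {R : realType} (Pbar T : R) (p1 p2 : R -> R) : Prop :=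
  measurable_fun `[0, T] p1 /\ measurable_fun `[0, T] p2 /\
  forall t, t \in `[0, T] -> 0 <= p1 t /\ 0 <= p2 t /\ p1 t + p2 t <= Pbar.

Definition tdma {R : realType} (Pbar T : R) (p1 p2 : R -> R) : Prop :=
  forall t, t \in `[0, T] ->
    (p1 t = Pbar /\ p2 t = 0) \/ (p1 t = 0 /\ p2 t = Pbar) \/ (p1 t = 0 /\ p2 t = 0).

Definition tspan {R : realType} (T : R) : set R := `[0, T].

Definition rate_region {R : realType} (D H b0 T : R) (x p1 p2 : R -> R) (r1 r2 : R)
  : Prop :=
  0 <= r1 /\ 0 <= r2 /\
  (r1%:E <= (T^-1)%:E *
     \int[@lebesgue_measure R]_(t in tspan T) (log2 (1 + p1 t * h1 D H b0 (x t)))%:E)%E /\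
  (r2%:E <= (T^-1)%:E *
     \int[@lebesgue_measure R]_(t in tspan T) (log2 (1 + p2 t * h2 D H b0 (x t)))%:E)%E /\
  ((r1 + r2)%:E <= (T^-1)%:E *
     \int[@lebesgue_measure R]_(t in tspan T)
        (log2 (1 + p1 t * h1 D H b0 (x t) + p2 t * h2 D H b0 (x t)))%:E)%E.

Definition cap_region {R : realType} (D H b0 V T Pbar : R) (r1 r2 : R) : Prop :=
  exists (x p1 p2 : R -> R),
    feasible_traj V T x /\ feasible_power Pbar T p1 p2 /\
    rate_region D H b0 T x p1 p2 r1 r2.

Definition hat_region {R : realType} (H b0 Pbar : R) (r1 r2 : R) : Prop :=
  0 <= r1 /\ 0 <= r2 /\ r1 + r2 <= log2 (1 + Pbar * b0 / H ^+ 2).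

(* hover-fly-hover trajectory with parameters xI, xF, tI, tF (T = tI + (xF-xI)/V + tF) *)
Definition hfh {R : realType} (V xI xF tI tF T : R) (t : R) : R :=
  if t <= tI then xI
  else if t < T - tF then xI + (t - tI) * V
  else xF.

From mathcomp Require Import all_boot all_order all_algebra.
From mathcomp Require Import all_classical all_reals all_analysis.
From mathcomp Require Import measurable_realfun ring lra.
Import Order.TTheory GRing.Theory Num.Theory.
Local Open Scope ring_scope.
Local Open Scope classical_set_scope.

(* Each gain is largest directly above its user, so at every instant
   1 + p1 h1 + p2 h2 <= 1 + (p1 + p2) b0/H^2 <= 1 + Pbar b0/H^2; averaging over
   [0, T] bounds r1 + r2 by C := log2 (1 + Pbar b0/H^2).
   Conversely, fly from GU 1 to GU 2 at full speed, which takes the fixed time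
   D/V, and split the remaining hover time L = T - D/V in the ratio r1 : (C - r1)
   between hovering above GU 1 and above GU 2, serving only the user below with
   full power.  This attains the rates r_i L/T, which tend to r_i as T -> oo. *)

Section ge0_le_integral_nonmeas.
Local Open Scope ereal_scope.
Context d (T : measurableType d) (R : realType) (mu : {measure set T -> \bar R}).

(* The nonnegative integral is a supremum over the simple functions below the
   integrand, hence monotone even when the integrands are not measurable. *)
Lemma ge0_le_integral_nonmeas (D : set T) (f g : T -> \bar R) :
  (forall x, D x -> 0 <= f x) -> (forall x, D x -> f x <= g x) ->
  \int[mu]_(x in D) f x <= \int[mu]_(x in D) g x.
Proof.
move=> f0 fg.
have g0 x : D x -> 0 <= g x by move=> Dx; exact: le_trans (f0 x Dx) (fg x Dx).
rewrite !ge0_integralE //; apply: ereal_sup_le => _ [h hf <-].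
exists h => //= x; apply: le_trans (hf x) _.
by rewrite /patch; case: ifP => // /set_mem; exact: fg.
Qed.

End ge0_le_integral_nonmeas.

Definition pulse {R : realType} (k a b : R) (t : R) : R := k * \1_(`[a, b]) t.

Definition hover_rate {R : realType} (H b0 Pbar : R) : R :=
  log2 (1 + Pbar * b0 / H ^+ 2).

Section lebesgue_pulse.
Context {R : realType}.
Local Notation mu := (@lebesgue_measure R).

Lemma lebesgue_measure_itvcc (a b : R) : a <= b -> mu `[a, b] = (b - a)%:E.
Proof.
move=> ab; rewrite lebesgue_measure_itv /= lte_fin.
by case: ltgtP ab => // -> _; rewrite subrr.
Qed.

Lemma pulseE (k a b t : R) : pulse k a b t = if a <= t <= b then k else 0.
Proof. by rewrite /pulse indicE mem_setE in_itv; case: ifP; rewrite ?mulr1 ?mulr0. Qed.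

Lemma pulse_ge0 (k a b t : R) : 0 <= k -> 0 <= pulse k a b t.
Proof. by move=> k0; rewrite pulseE; case: ifP. Qed.

Lemma pulse_out (k a b t : R) : ~~ (a <= t <= b) -> pulse k a b t = 0.
Proof. by move=> /negbTE tab; rewrite pulseE tab. Qed.

Lemma measurable_pulse (A : set R) (k a b : R) : measurable_fun A (pulse k a b).
Proof.
apply: measurable_funM; first exact: measurable_cst.
by apply: measurable_indic; exact: measurable_itv.
Qed.

Lemma integral_pulse (c e k a b : R) : 0 <= k -> c <= a -> a <= b -> b <= e ->
  (\int[mu]_(t in `[c, e]) (pulse k a b t)%:E = (k * (b - a))%:E)%E.
Proof.
move=> k0 ca ab be.
have [mab mce] := (measurable_itv `[a, b]%R, measurable_itv `[c, e]%R).
transitivity (k%:E * \int[mu]_(t in `[c, e]) (\1_(`[a, b]) t)%:E)%E.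
  apply: (@integralZl_indic _ _ _ mu _ mce (fun=> `[a, b]%classic)) => //.
  by move=> /lt_geF; rewrite k0.
rewrite integral_indic // setIidl.
  by rewrite EFinM; congr (_ * _)%E; exact: lebesgue_measure_itvcc.
by move=> t /=; rewrite !in_itv /= => /andP[a_t t_b]; apply/andP; split; lra.
Qed.

End lebesgue_pulse.

Section log2_gain.
Context {R : realType}.

Lemma log2_1 : log2 (1 : R) = 0.
Proof. by rewrite /log2 ln1 mul0r. Qed.

Lemma log2_ge0 (x : R) : 1 <= x -> 0 <= log2 x.
Proof. by move=> x1; rewrite /log2 divr_ge0 // ln_ge0 // ler1n. Qed.

Lemma log2_gt0 (x : R) : 1 < x -> 0 < log2 x.
Proof. by move=> x1; rewrite /log2 divr_gt0 // ln_gt0 // ltr1n. Qed.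

Lemma ler_log2 (x y : R) : 0 < x -> x <= y -> log2 x <= log2 y.
Proof.
move=> x0 xy; rewrite /log2 ler_wpM2r ?invr_ge0 ?ln_ge0 ?ler1n //.
by rewrite ler_ln // ?posrE // (lt_le_trans x0 xy).
Qed.

Lemma gain_ge0 (H b0 xk x : R) : 0 <= b0 -> 0 <= gain H b0 xk x.
Proof. by move=> b00; rewrite divr_ge0 // addr_ge0 // sqr_ge0. Qed.

Lemma gain_le_overhead (H b0 xk x : R) : 0 < H -> 0 <= b0 ->
  gain H b0 xk x <= b0 / H ^+ 2.
Proof.
move=> H0 b00; rewrite /gain ler_wpM2l // lef_pV2 ?posrE ?exprn_gt0 //.
  by rewrite lerDr sqr_ge0.
by rewrite ltr_wpDl ?sqr_ge0 ?exprn_gt0.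
Qed.

Lemma gain_overhead (H b0 xk : R) : gain H b0 xk xk = b0 / H ^+ 2.
Proof. by rewrite /gain subrr expr0n /= add0r. Qed.

End log2_gain.

Section converse.
Context {R : realType} {D H b0 Pbar : R}.
Hypotheses (H_gt0 : 0 < H) (b0_ge0 : 0 <= b0).
Local Notation C := (hover_rate H b0 Pbar).

Lemma sum_rate_bound (p1 p2 y : R) : 0 <= p1 -> 0 <= p2 -> p1 + p2 <= Pbar ->
  0 <= log2 (1 + p1 * h1 D H b0 y + p2 * h2 D H b0 y) <= C.
Proof.
move=> p10 p20 pP.
have g10 := gain_ge0 H _ (- (D / 2)) y b0_ge0.
have g20 := gain_ge0 H _ (D / 2) y b0_ge0.
have g1 := gain_le_overhead _ _ (- (D / 2)) y H_gt0 b0_ge0.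
have g2 := gain_le_overhead _ _ (D / 2) y H_gt0 b0_ge0.
rewrite /h1 /h2 /hover_rate -mulrA.
move: (b0 / H ^+ 2) g1 g2 => G g1 g2.
have sum_ge1 : 1 <= 1 + p1 * gain H b0 (- (D / 2)) y + p2 * gain H b0 (D / 2) y.
  by nra.
by rewrite log2_ge0 //= ler_log2 //; [lra | nra].
Qed.

Lemma integral_sum_rate_le (T : R) (x p1 p2 : R -> R) : 0 <= T ->
  feasible_power Pbar T p1 p2 ->
  (\int[@lebesgue_measure R]_(t in tspan T)
     (log2 (1 + p1 t * h1 D H b0 (x t) + p2 t * h2 D H b0 (x t)))%:E
   <= (C * T)%:E)%E.
Proof.
move=> T0 [_ [_ pw]].
have rate_bound t : tspan T t ->
    0 <= log2 (1 + p1 t * h1 D H b0 (x t) + p2 t * h2 D H b0 (x t)) <= C.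
  by move=> /mem_set /pw [p10 [p20 pP]]; exact: sum_rate_bound.
apply: (@le_trans _ _ (\int[@lebesgue_measure R]_(t in tspan T) (pulse C 0 T t)%:E)%E).
  apply: ge0_le_integral_nonmeas => t /[dup] /rate_bound /andP[r0 rC] tT.
    by rewrite lee_fin.
  by move: tT; rewrite /tspan /= in_itv /= pulseE => ->; rewrite lee_fin.
have C_ge0 : 0 <= C.
  have tspan0 : tspan T 0 by rewrite /tspan /= in_itv /= lexx.
  have /andP[r0 rC] := rate_bound 0 tspan0.
  by rewrite (le_trans r0 rC).
by rewrite integral_pulse ?subr0.
Qed.

Lemma cap_region_sub_hat (V T r1 r2 : R) : 0 < T ->
  cap_region D H b0 V T Pbar r1 r2 -> hat_region H b0 Pbar r1 r2.
Proof.
move=> T0 [x [p1 [p2 [_ [pw [r10 [r20 [_ [_ r12]]]]]]]]]; do 2!split => //.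
have Tinv_ge0 : (0 <= (T^-1)%:E)%E by rewrite lee_fin invr_ge0 ltW.
have := le_trans r12 (lee_wpmul2l Tinv_ge0 (integral_sum_rate_le _ x _ _ (ltW T0) pw)).
by rewrite -EFinM lee_fin mulrCA mulVf ?mulr1 // gt_eqF.
Qed.

End converse.

Lemma rate_region_le {R : realType} (D H b0 T : R) (x p1 p2 : R -> R)
    (r1 r2 s1 s2 : R) :
  0 <= s1 <= r1 -> 0 <= s2 <= r2 ->
  rate_region D H b0 T x p1 p2 r1 r2 -> rate_region D H b0 T x p1 p2 s1 s2.
Proof.
move=> /andP[s10 sr1] /andP[s20 sr2] [_ [_ [rate1 [rate2 rate12]]]].
do 2!split => //; split; [|split].
- by apply: le_trans rate1; rewrite lee_fin.
- by apply: le_trans rate2; rewrite lee_fin.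
- by apply: le_trans rate12; rewrite lee_fin lerD.
Qed.

Lemma tdma_feasible_power {R : realType} (Pbar T : R) (p1 p2 : R -> R) :
  0 <= Pbar -> measurable_fun `[0, T] p1 -> measurable_fun `[0, T] p2 ->
  tdma Pbar T p1 p2 -> feasible_power Pbar T p1 p2.
Proof.
move=> P0 mp1 mp2 tp; do 2!split => //.
by move=> t /tp [[-> ->]|[[-> ->]|[-> ->]]]; rewrite ?addr0 ?add0r.
Qed.

Lemma tdma_pulse {R : realType} (Pbar T a b c e : R) :
  b < c -> tdma Pbar T (pulse Pbar a b) (pulse Pbar c e).
Proof.
move=> bc t _; rewrite !pulseE.
case: ifP => [/andP[_ tb]|_]; case: ifP => [/andP[ct _]|_].
- by exfalso; lra.
- by left.
- by right; left.
- by right; right.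
Qed.

Section hover_fly_hover.
Context {R : realType}.
Variables (V xI xF tI tF T : R).
Local Notation x := (hfh V xI xF tI tF T).

Lemma hfh_hover_start (t : R) : t <= tI -> x t = xI.
Proof. by move=> ttI; rewrite /hfh ttI. Qed.

Lemma hfh_hover_end (t : R) : tI < T - tF -> T - tF <= t -> x t = xF.
Proof.
move=> tITF TFt; rewrite /hfh ifF; last by apply/negbTE; rewrite -ltNge; lra.
by rewrite ifF //; apply/negbTE; rewrite -leNgt.
Qed.

Lemma hfh_increment (s t : R) : 0 <= V -> tI <= T - tF ->
  xF = xI + (T - tF - tI) * V -> s <= t -> 0 <= x t - x s <= V * (t - s).
Proof.
move=> V0 tI_le xF_def st; rewrite /hfh.
case: (leP t tI) => h1; case: (leP s tI) => h2;
  try case: (ltP t (T - tF)) => h3; try case: (ltP s (T - tF)) => h4;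
  rewrite ?xF_def; apply/andP; split; nra.
Qed.

Lemma hfh_lipschitz (s t : R) : 0 <= V -> tI <= T - tF ->
  xF = xI + (T - tF - tI) * V -> `|x t - x s| <= V * `|t - s|.
Proof.
move=> V0 tI_le xF_def.
wlog st : s t / s <= t.
  by move=> wl; case: (leP s t) => [/wl //|/ltW /wl]; rewrite distrC (distrC t).
have /andP[? ?] := hfh_increment _ _ V0 tI_le xF_def st.
by rewrite ger0_norm // ger0_norm ?subr_ge0.
Qed.

End hover_fly_hover.

Section hfh_tdma_rates.
Context {R : realType} {D H b0 Pbar V tI tF T : R}.
Hypotheses (D_gt0 : 0 < D) (V_gt0 : 0 < V) (b0_ge0 : 0 <= b0) (Pbar_ge0 : 0 <= Pbar).
Hypotheses (tI_ge0 : 0 <= tI) (tF_ge0 : 0 <= tF)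
  (T_split : tI + (D / 2 - - (D / 2)) / V + tF = T).
Local Notation x := (hfh V (- (D / 2)) (D / 2) tI tF T).
Local Notation C := (hover_rate H b0 Pbar).
Local Notation p1 := (pulse Pbar 0 tI).
Local Notation p2 := (pulse Pbar (T - tF) T).

Let flight_end : T - tF = tI + D / V.
Proof. by rewrite -T_split opprK -splitr addrK. Qed.

Let hover_gap : tI < T - tF.
Proof. by rewrite flight_end ltrDl divr_gt0. Qed.

Lemma hfh_tdma_feasible_traj : feasible_traj V T x.
Proof.
move=> s t _ _; apply: hfh_lipschitz; [exact: ltW V_gt0 | exact: ltW hover_gap |].
rewrite flight_end addrAC subrr add0r divfK ?gt_eqF //; lra.
Qed.

Lemma hfh_tdma_power : feasible_power Pbar T p1 p2 /\ tdma Pbar T p1 p2.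
Proof.
have tp := tdma_pulse Pbar T 0 _ _ T hover_gap.
by split => //; apply: tdma_feasible_power => //; exact: measurable_pulse.
Qed.

Lemma rate1_pulse (t : R) : log2 (1 + p1 t * h1 D H b0 (x t)) = pulse C 0 tI t.
Proof.
rewrite !pulseE; case: ifP => [/andP[_ ttI]|_]; last by rewrite mul0r addr0 log2_1.
by rewrite hfh_hover_start // /h1 gain_overhead /hover_rate mulrA.
Qed.

Lemma rate2_pulse (t : R) : log2 (1 + p2 t * h2 D H b0 (x t)) = pulse C (T - tF) T t.
Proof.
rewrite !pulseE; case: ifP => [/andP[TFt _]|_]; last by rewrite mul0r addr0 log2_1.
by rewrite hfh_hover_end // /h2 gain_overhead /hover_rate mulrA.
Qed.

Lemma sum_rate_pulse (t : R) :
  log2 (1 + p1 t * h1 D H b0 (x t) + p2 t * h2 D H b0 (x t)) =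
  pulse C 0 tI t + pulse C (T - tF) T t.
Proof.
(* [lra] does not use section hypotheses, so they are copied into the context. *)
have gap := hover_gap.
have [TFt|tTF] := leP (T - tF) t.
  have out k : pulse k 0 tI t = 0 by apply: pulse_out; apply/negP => /andP[_]; lra.
  by rewrite !out mul0r addr0 rate2_pulse add0r.
have out k : pulse k (T - tF) T t = 0 by apply: pulse_out; apply/negP => /andP[]; lra.
by rewrite !out mul0r addr0 rate1_pulse addr0.
Qed.

Lemma rate_region_hfh_tdma :
  rate_region D H b0 T x p1 p2 (C * tI / T) (C * tF / T).
Proof.
have C_ge0 : 0 <= C.
  rewrite /hover_rate log2_ge0 // lerDl.
  by apply: divr_ge0; [exact: mulr_ge0 Pbar_ge0 b0_ge0 | exact: sqr_ge0].
move: hover_gap tI_ge0 tF_ge0 => gap tI0 tF0.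
have intp1 : (\int[@lebesgue_measure R]_(t in tspan T) (pulse C 0 tI t)%:E
    = (C * tI)%:E)%E by rewrite integral_pulse ?subr0 //; lra.
have intp2 : (\int[@lebesgue_measure R]_(t in tspan T) (pulse C (T - tF) T t)%:E
    = (C * tF)%:E)%E by rewrite integral_pulse ?subKr //; lra.
have int12 : (\int[@lebesgue_measure R]_(t in tspan T)
    (log2 (1 + p1 t * h1 D H b0 (x t) + p2 t * h2 D H b0 (x t)))%:E =
    (C * tI + C * tF)%:E)%E.
  under eq_integral do rewrite sum_rate_pulse EFinD.
  rewrite ge0_integralD ?intp1 ?intp2 -?EFinD //; first exact: measurable_itv.
  - by move=> t _; rewrite lee_fin pulse_ge0.
  - by apply/measurable_EFinP; apply: measurable_pulse.
  - by move=> t _; rewrite lee_fin pulse_ge0.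
  - by apply/measurable_EFinP; apply: measurable_pulse.
have T0 : 0 <= T by lra.
split; [|split; [|split; [|split]]].
- by apply: divr_ge0 => //; exact: mulr_ge0.
- by apply: divr_ge0 => //; exact: mulr_ge0.
- by under eq_integral do rewrite rate1_pulse; rewrite intp1 -EFinM mulrC.
- by under eq_integral do rewrite rate2_pulse; rewrite intp2 -EFinM mulrC.
- by rewrite int12 -EFinM -mulrDl mulrC.
Qed.

End hfh_tdma_rates.

Lemma rate_loss_lt {R : realType} (r M W eps T : R) :
  0 <= r <= M -> 0 < W -> 0 < eps -> (M + 1) * W / eps + W <= T ->
  `|r * (T - W) / T - r| < eps.
Proof.
move=> /andP[r0 rM] W0 eps0 T_ge.
have epsK : eps * ((M + 1) * W / eps) = (M + 1) * W by rewrite mulrC divfK ?gt_eqF.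
have K0 : 0 < (M + 1) * W / eps by rewrite divr_gt0 // mulr_gt0 //; lra.
have T0 : 0 < T by lra.
have -> : r * (T - W) / T - r = - (r * W / T) by field; rewrite gt_eqF.
have rWT_ge0 : 0 <= r * W / T by rewrite divr_ge0 ?mulr_ge0 // ltW.
by rewrite normrN ger0_norm // ltr_pdivrMr //; nra.
Qed.

Lemma hfh_tdma_scaled_rates {R : realType} {D H b0 Pbar V T r1 r2 : R} :
  0 < D -> 0 < H -> 0 < b0 -> 0 < Pbar -> 0 < V -> D / V <= T ->
  hat_region H b0 Pbar r1 r2 ->
  exists tI tF : R,
    [/\ 0 <= tI, 0 <= tF, tI + (D / 2 - - (D / 2)) / V + tF = T &
      rate_region D H b0 T (hfh V (- (D / 2)) (D / 2) tI tF T)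
        (pulse Pbar 0 tI) (pulse Pbar (T - tF) T)
        (r1 * (T - D / V) / T) (r2 * (T - D / V) / T)].
Proof.
move=> D0 H0 b00 P0 V0 W_le [r10 [r20 r12]].
set C := hover_rate H b0 Pbar; have {}r12 : r1 + r2 <= C := r12.
have C0 : 0 < C.
  by rewrite log2_gt0 // ltrDl; apply: divr_gt0; [exact: mulr_gt0 | exact: exprn_gt0].
set L := T - D / V; have L0 : 0 <= L by rewrite subr_ge0.
pose tI := r1 / C * L; pose tF := L - tI.
have CtI : C * tI = r1 * L by rewrite /tI mulrA mulrCA divff ?mulr1 // gt_eqF.
have CtF : C * tF = (C - r1) * L by rewrite /tF mulrBr CtI mulrBl.
have tI0 : 0 <= tI by apply: mulr_ge0 => //; apply: divr_ge0 => //; exact: ltW.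
have tF0 : 0 <= tF.
  rewrite subr_ge0 -[leRHS]mul1r; apply: ler_wpM2r => //.
  by rewrite ler_pdivrMr // mul1r; lra.
have T_split : tI + (D / 2 - - (D / 2)) / V + tF = T.
  by rewrite opprK -splitr /tF /L; lra.
exists tI, tF; split => //.
have := rate_region_hfh_tdma (H := H) D0 V0 (ltW b00) (ltW P0) tI0 tF0 T_split.
have Tinv0 : 0 < T^-1 by rewrite invr_gt0; apply: lt_le_trans W_le; rewrite divr_gt0.
apply: rate_region_le; apply/andP; split; rewrite ?ler_pM2r // -/C.
- by apply: mulr_ge0; [exact: mulr_ge0 | exact: ltW].
- by rewrite CtI.
- by apply: mulr_ge0; [exact: mulr_ge0 | exact: ltW].
- by rewrite CtF; apply: ler_wpM2r => //; lra.
Qed.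

Lemma hfh_tdma_approach_hat {R : realType} (D H b0 Pbar V : R) :
  0 < D -> 0 < H -> 0 < b0 -> 0 < Pbar -> 0 < V ->
  forall r1 r2 : R, hat_region H b0 Pbar r1 r2 ->
  forall eps : R, 0 < eps ->
  exists T0 : R, forall T : R, T0 <= T ->
    exists (tI tF : R) (p1 p2 : R -> R) (s1 s2 : R),
      0 <= tI /\ 0 <= tF /\ tI + (D / 2 - - (D / 2)) / V + tF = T /\
      feasible_traj V T (hfh V (- (D / 2)) (D / 2) tI tF T) /\
      feasible_power Pbar T p1 p2 /\ tdma Pbar T p1 p2 /\
      rate_region D H b0 T (hfh V (- (D / 2)) (D / 2) tI tF T) p1 p2 s1 s2 /\
      `|s1 - r1| < eps /\ `|s2 - r2| < eps.
Proof.
move=> D0 H0 b00 P0 V0 r1 r2 hat eps eps0.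
have [r10 [r20 _]] := hat.
have W0 : 0 < D / V by rewrite divr_gt0.
exists ((r1 + r2 + 1) * (D / V) / eps + D / V) => T T_ge.
have W_le : D / V <= T.
  suff : 0 < (r1 + r2 + 1) * (D / V) / eps by lra.
  by apply: divr_gt0 => //; apply: mulr_gt0 => //; lra.
have [tI [tF] [tI0 tF0 T_split rates]] :=
  hfh_tdma_scaled_rates D0 H0 b00 P0 V0 W_le hat.
have [pw tp] := hfh_tdma_power D0 V0 (ltW P0) T_split.
exists tI, tF, (pulse Pbar 0 tI), (pulse Pbar (T - tF) T).
exists (r1 * (T - D / V) / T), (r2 * (T - D / V) / T).
do 3!split => //; split; first exact: hfh_tdma_feasible_traj D0 V0 T_split.
do 3!split => //.
by split; apply: (rate_loss_lt _ (r1 + r2)) => //; apply/andP; split => //; lra.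
Qed.

Theorem theorem1 (R : realType) (D H b0 Pbar V : R) :
  0 < D -> 0 < H -> 0 < b0 -> 0 < Pbar -> 0 < V ->
  (* C(V,T,Pbar) is contained in hat C(Pbar) for every T > 0 *)
  (forall T r1 r2 : R, 0 < T ->
     cap_region D H b0 V T Pbar r1 r2 -> hat_region H b0 Pbar r1 r2) /\
  (* every point of hat C(Pbar) is the limit, as T -> oo, of rate pairs achieved by
     HFH trajectories with xI = -D/2, xF = D/2 and TDMA transmission *)
  (forall r1 r2 : R, hat_region H b0 Pbar r1 r2 ->
     forall eps : R, 0 < eps ->
     exists T0 : R, forall T : R, T0 <= T ->
       exists (tI tF : R) (p1 p2 : R -> R) (s1 s2 : R),
         0 <= tI /\ 0 <= tF /\ tI + (D / 2 - - (D / 2)) / V + tF = T /\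
         feasible_traj V T (hfh V (- (D / 2)) (D / 2) tI tF T) /\
         feasible_power Pbar T p1 p2 /\ tdma Pbar T p1 p2 /\
         rate_region D H b0 T (hfh V (- (D / 2)) (D / 2) tI tF T) p1 p2 s1 s2 /\
         `|s1 - r1| < eps /\ `|s2 - r2| < eps).
Proof.
move=> D0 H0 b00 P0 V0; split; first exact: (cap_region_sub_hat H0 (ltW b00)).
exact: hfh_tdma_approach_hat.
Qed.
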